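(* Assume $q^{2d}\neq1$ for all integers $d\ge1$. The algebra of universal invariants of the universal linear form, i.e. the subalgebra $\{\mathcal I\in\mathbb C\langle\mathcal A,\mathcal B\rangle : E\mathcal I=F\mathcal I=0,\ K\mathcal I=\mathcal I\}$ of the free algebra on $\mathcal A,\mathcal B$, has no finite set of generators.
   Context: Fix $q\in\mathbb C$ with $|q|=1$, $q\neq\pm1,\pm i$, and a square root $q^{1/2}$. $\mathbb C\langle\mathcal A,\mathcal B\rangle$ is the free associative algebra on two variables (the coefficients of the universal linear form $x\mathcal A+y\mathcal B$), with the action $K\mathcal A=q^{1/2}\mathcal A$, $K\mathcal B=q^{-1/2}\mathcal B$, $E\mathcal A=0$, $E\mathcal B=-q^{3/2}\mathcal A$, $F\mathcal A=-q^{-3/2}\mathcal B$, $F\mathcal B=0$, $K1=1$, $E1=F1=0$, extended by $K(ab)=K(a)K(b)$, $E(ab)=E(a)K(b)+K^{-1}(a)E(b)$, $F(ab)=F(a)K(b)+K^{-1}(a)F(b)$. *)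

(* The complex numbers are modelled as R[i] (mathcomp
   real_closed `complex`) over an arbitrary realType R (a complete archimedean
   ordered field, i.e. a model of the reals). *)
From Stdlib Require List.
From HB Require Import structures.
From mathcomp Require Import all_boot all_order all_algebra.
From mathcomp Require Import reals.
From mathcomp Require Import complex.
Set Implicit Arguments. Unset Strict Implicit. Unset Printing Implicit Defensive.
Import Order.TTheory GRing.Theory Num.Theory.
Local Open Scope ring_scope.

(* Words in the two letters: false = A, true = B. *)
Definition word := seq bool.

Section FreeAlgebra.
Variable C : fieldType.

(* An element of the free algebra C<A,B> is a finitely supported function
   word -> C (coefficient of each monomial).  Since the alphabet is finite,
   finite support is equivalent to bounded word length of the support. *)
Definition fa := word -> C.
Definition fsupp (p : fa) : Prop := exists n, forall w, (n <= size w)%N -> p w = 0.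

Definition fa0 : fa := fun _ => 0.
Definition fa_add (f g : fa) : fa := fun w => f w + g w.
Definition fa_scale (c : C) (f : fa) : fa := fun w => c * f w.
Definition delta (u : word) : fa := fun w => (w == u)%:R.
Definition fa1 : fa := delta [::].
Definition fa_mul (f g : fa) : fa :=
  fun w => \sum_(i < (size w).+1) f (take i w) * g (drop i w).

Inductive gen (S : seq fa) : fa -> Prop :=
| gen_one : gen S fa1
| gen_mem f : List.In f S -> gen S f
| gen_add f g : gen S f -> gen S g -> gen S (fa_add f g)
| gen_scale c f : gen S f -> gen S (fa_scale c f)
| gen_mul f g : gen S f -> gen S g -> gen S (fa_mul f g)
| gen_ext f g : gen S f -> (forall w, f w = g w) -> gen S g.

Variable s : C. (* the chosen square root q^{1/2} *)

Definition Kscal (w : word) : C := s ^+ count (fun b => ~~ b) w * s ^- count id w.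
Definition Kmon (w : word) : fa := fa_scale (Kscal w) (delta w).
Definition Kinvmon (w : word) : fa := fa_scale (Kscal w)^-1 (delta w).

Definition Egen (x : bool) : fa :=
  if x then fa_scale (- s ^+ 3) (delta [:: false]) else fa0.
Definition Fgen (x : bool) : fa :=
  if x then fa0 else fa_scale (- s ^- 3) (delta [:: true]).

(* Extension to monomials by the twisted Leibniz rule with a = x, b = w:
   E(x w) = E(x) K(w) + K^{-1}(x) E(w), E(1) = 0 (same for F). *)
Fixpoint Emon (w : word) : fa :=
  match w with
  | [::] => fa0
  | x :: w' => fa_add (fa_mul (Egen x) (Kmon w')) (fa_mul (Kinvmon [:: x]) (Emon w'))
  end.
Fixpoint Fmon (w : word) : fa :=
  match w with
  | [::] => fa0
  | x :: w' => fa_add (fa_mul (Fgen x) (Kmon w')) (fa_mul (Kinvmon [:: x]) (Fmon w'))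
  end.

(* Linear extension.  K, E, F send a monomial of length n to a combination of
   monomials of length n, so the coefficient of w' in X(p) only involves the
   monomials of p of length size w'. *)
Definition lin_ext (M : word -> fa) (p : fa) : fa :=
  fun w' => \sum_(t : (size w').-tuple bool) p t * M t w'.
Definition Kop := lin_ext Kmon.
Definition Eop := lin_ext Emon.
Definition Fop := lin_ext Fmon.

Definition invariant (I : fa) : Prop :=
  fsupp I /\ (forall w, Eop I w = 0) /\ (forall w, Fop I w = 0)
  /\ (forall w, Kop I w = I w).

Definition inv_fin_gen : Prop :=
  exists S : seq fa, (forall f, List.In f S -> invariant f) /\
    (forall I, invariant I -> gen S I).

End FreeAlgebra.

(* Since [q] is not a root of unity, [K]-invariance forces an invariant to be
   supported on balanced words (as many [A]'s as [B]'s).  The word [A^n B^n] has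
   no balanced prefix besides the empty one and itself, so in a product of
   balanced-supported elements its coefficient only comes from the two trivial
   factorisations.  Hence, if finitely many generators all vanish on words of
   length [>= 2n], every element of the algebra they generate has coefficient 0
   on [A^n B^n].  But [I_0 = 1], [I_(n+1) = A I_n B - q^-1 B I_n A] is an invariant
   with coefficient 1 on [A^n B^n]: [E] and [F] are twisted derivations, and the
   factor [q^-1 = s^-2] makes the contributions of the two terms cancel. *)

From Pilot Require Import Defs.
From Stdlib Require Import FunctionalExtensionality.
From HB Require Import structures.
From mathcomp Require Import all_boot all_order all_algebra.
From mathcomp Require Import reals complex.
From mathcomp Require Import ring zify.
Set Implicit Arguments. Unset Strict Implicit. Unset Printing Implicit Defensive.
Import Order.TTheory GRing.Theory Num.Theory.
Local Open Scope ring_scope.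

Section FreeAlgebraProduct.
Variable C : fieldType.
Implicit Types (f g h : fa C) (c : C) (x y z : bool) (u w : word).

Definition lquot y f : fa C := fun w => f (y :: w).

Lemma fa_mul_nil f g : fa_mul f g [::] = f [::] * g [::].
Proof. by rewrite /fa_mul big_ord_recl big_ord0 addr0. Qed.

Lemma fa_mul_cons f g y w :
  fa_mul f g (y :: w) = f [::] * g (y :: w) + fa_mul (lquot y f) g w.
Proof. by rewrite /fa_mul big_ord_recl. Qed.

Lemma fa_addr0 f : fa_add f (fa0 C) = f.
Proof. by apply: functional_extensionality => w; rewrite /fa_add addr0. Qed.

Lemma fa_mul0r f : fa_mul f (fa0 C) = fa0 C.
Proof.
apply: functional_extensionality => w.
by rewrite /fa_mul big1 // => i _; rewrite mulr0.
Qed.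

Lemma fa_mulDl f g h : fa_mul (fa_add f g) h = fa_add (fa_mul f h) (fa_mul g h).
Proof.
apply: functional_extensionality => w; rewrite /fa_mul /fa_add -big_split.
by apply: eq_bigr => i _; rewrite mulrDl.
Qed.

Lemma fa_mulZl c f h : fa_mul (fa_scale c f) h = fa_scale c (fa_mul f h).
Proof.
apply: functional_extensionality => w; rewrite /fa_mul /fa_scale big_distrr /=.
by apply: eq_bigr => i _; rewrite mulrA.
Qed.

Lemma fa_mulZr c f h : fa_mul h (fa_scale c f) = fa_scale c (fa_mul h f).
Proof.
apply: functional_extensionality => w; rewrite /fa_mul /fa_scale big_distrr /=.
by apply: eq_bigr => i _; rewrite mulrCA.
Qed.

Lemma fa_mul_delta0l c g w : fa_mul (fa_scale c (delta C [::])) g w = c * g w.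
Proof.
case: w => [|y w]; first by rewrite fa_mul_nil /fa_scale /delta eqxx mulr1.
rewrite fa_mul_cons /fa_scale /delta eqxx mulr1 /fa_mul big1 ?addr0 // => i _.
by rewrite /lquot mulr0 mul0r.
Qed.

Lemma lquot_delta1 x y : lquot y (delta C [:: x]) = fa_scale (y == x)%:R (delta C [::]).
Proof.
apply: functional_extensionality => w; rewrite /lquot /delta /fa_scale eqseq_cons.
by case: (y == x); rewrite ?mul1r ?mul0r.
Qed.

Lemma lquot_scale_delta1 c x y :
  lquot y (fa_scale c (delta C [:: x])) = fa_scale (c * (y == x)%:R) (delta C [::]).
Proof.
apply: functional_extensionality => w; rewrite /lquot /fa_scale /delta eqseq_cons.
by case: (y == x); rewrite ?mulr1 ?mulr0 ?mul0r.
Qed.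

Lemma fa_mul_delta1l x g y w : fa_mul (delta C [:: x]) g (y :: w) = (y == x)%:R * g w.
Proof. by rewrite fa_mul_cons lquot_delta1 fa_mul_delta0l /delta mul0r add0r. Qed.

Lemma fa_mul_delta1r z f w y : fa_mul f (delta C [:: z]) (rcons w y) = (y == z)%:R * f w.
Proof.
elim: w f => [|x w IHw] f /=.
  by rewrite fa_mul_cons fa_mul_nil /delta /lquot eqseq_cons andbT mulr0 addr0 mulrC.
rewrite fa_mul_cons IHw /delta eqseq_cons.
by case: w {IHw} => [|? ?]; rewrite andbF mulr0 add0r.
Qed.

Definition vanish_from f n := forall w, (n <= size w)%N -> f w = 0.

Lemma vanish_from_delta u : vanish_from (delta C u) (size u).+1.
Proof. by move=> w hw; rewrite /delta; case: eqP => // e; move: hw; rewrite e ltnn. Qed.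

Lemma vanish_from_mul f g n m :
  vanish_from f n -> vanish_from g m -> vanish_from (fa_mul f g) (n + m).
Proof.
move=> hf hg w hw; rewrite /fa_mul big1 // => i _.
have : (n <= size (take i w))%N || (m <= size (drop i w))%N.
  by rewrite size_take size_drop; case: ltnP => h; lia.
by case/orP => [/hf ->|/hg ->]; rewrite ?mul0r ?mulr0.
Qed.

Lemma fsupp_seq_bound (S : seq (fa C)) :
  (forall f, List.In f S -> fsupp f) -> exists N, forall f, List.In f S -> vanish_from f N.
Proof.
elim: S => [|g S IHS] HS; first by exists 0%N.
have [N hN] := IHS (fun f Sf => HS f (or_intror Sf)).
have [M hM] := HS g (or_introl erefl).
exists (maxn M N) => f [<-|Sf] w; rewrite geq_max => /andP[hMw hNw].
  exact: hM.
exact: hN.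
Qed.

Lemma sum_tuple_cons n (F : word -> C) :
  \sum_(t : n.+1.-tuple bool) F t = \sum_x \sum_(t : n.-tuple bool) F (x :: t).
Proof.
rewrite pair_big (reindex (fun p : bool * n.-tuple bool => [tuple of p.1 :: p.2])) /=.
  by apply: eq_bigr => -[x t].
exists (fun t : n.+1.-tuple bool => (thead t, behead_tuple t)) => [[x t] _|t _] /=.
  by congr pair; apply: val_inj.
by case/tupleP: t => x t; apply: val_inj.
Qed.

Lemma sum_tuple_delta w (F : word -> C) :
  \sum_(t : (size w).-tuple bool) F t * (w == t)%:R = F w.
Proof.
rewrite (bigD1 (in_tuple w)) //= eqxx mulr1 big1 ?addr0 // => t ne.
case: eqP => [e|]; last by rewrite mulr0.
by case/eqP: ne; apply: val_inj.
Qed.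

End FreeAlgebraProduct.

Section KAction.
Variables (C : fieldType) (s : C).
Implicit Types (f g : fa C) (c : C) (x y z : bool) (u w : word).

Lemma Kscal_nil : Kscal s [::] = 1.
Proof. by rewrite /Kscal /= expr0 invr1 mulr1. Qed.

Lemma Kscal_cat u w : Kscal s (u ++ w) = Kscal s u * Kscal s w.
Proof. by rewrite /Kscal !count_cat !exprD invfM mulrACA. Qed.

Lemma Kscal_cons y w : Kscal s (y :: w) = Kscal s [:: y] * Kscal s w.
Proof. by rewrite -Kscal_cat. Qed.

Lemma Kscal_A : Kscal s [:: false] = s.
Proof. by rewrite /Kscal /= expr1 expr0 invr1 mulr1. Qed.

Lemma Kscal_B : Kscal s [:: true] = s^-1.
Proof. by rewrite /Kscal /= expr1 expr0 mul1r. Qed.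

Definition Kdiag f : fa C := fun w => Kscal s w * f w.
Definition Kdiag_inv f : fa C := fun w => (Kscal s w)^-1 * f w.

Lemma Kop_Kdiag f w : Kop s f w = Kdiag f w.
Proof.
rewrite /Kop /lin_ext /Kmon /fa_scale /delta.
under eq_bigr do rewrite mulrA.
by rewrite (sum_tuple_delta w (fun t => f t * Kscal s t)) mulrC.
Qed.

Lemma Kdiag_add f g : Kdiag (fa_add f g) = fa_add (Kdiag f) (Kdiag g).
Proof. by apply: functional_extensionality => w; rewrite /Kdiag /fa_add mulrDr. Qed.

Lemma Kdiag_scale c f : Kdiag (fa_scale c f) = fa_scale c (Kdiag f).
Proof. by apply: functional_extensionality => w; rewrite /Kdiag /fa_scale mulrCA. Qed.

Lemma Kdiag_mul f g : Kdiag (fa_mul f g) = fa_mul (Kdiag f) (Kdiag g).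
Proof.
apply: functional_extensionality => w; rewrite /Kdiag /fa_mul big_distrr /=.
by apply: eq_bigr => i _; rewrite -{1}(cat_take_drop i w) Kscal_cat mulrACA.
Qed.

Lemma Kdiag_inv_mul f g : Kdiag_inv (fa_mul f g) = fa_mul (Kdiag_inv f) (Kdiag_inv g).
Proof.
apply: functional_extensionality => w; rewrite /Kdiag_inv /fa_mul big_distrr /=.
by apply: eq_bigr => i _; rewrite -{1}(cat_take_drop i w) Kscal_cat invfM mulrACA.
Qed.

Lemma Kdiag_delta u : Kdiag (delta C u) = fa_scale (Kscal s u) (delta C u).
Proof.
apply: functional_extensionality => w; rewrite /Kdiag /fa_scale /delta.
by case: eqP => [->|]; rewrite ?mulr0.
Qed.

Lemma Kdiag_inv_delta u : Kdiag_inv (delta C u) = fa_scale (Kscal s u)^-1 (delta C u).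
Proof.
apply: functional_extensionality => w; rewrite /Kdiag_inv /fa_scale /delta.
by case: eqP => [->|]; rewrite ?mulr0.
Qed.

Hypothesis s_neq0 : s != 0.

Lemma Kscal_neq0 w : Kscal s w != 0.
Proof. by rewrite /Kscal mulf_neq0 ?invr_eq0 ?expf_neq0. Qed.

Lemma Kdiag_inv_fixed f : Kdiag f = f -> Kdiag_inv f = f.
Proof.
move=> Kf; apply: functional_extensionality => w.
by rewrite -{1}Kf /Kdiag_inv /Kdiag mulrA mulVf ?mul1r ?Kscal_neq0.
Qed.

Definition wrap x f z := fa_mul (fa_mul (delta C [:: x]) f) (delta C [:: z]).
Definition inv_step f := fa_add (wrap false f true) (fa_scale (- s ^- 2) (wrap true f false)).
Fixpoint invn n := if n is n'.+1 then inv_step (invn n') else delta C [::].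

Lemma Kdiag_inv_step f : Kdiag f = f -> Kdiag (inv_step f) = inv_step f.
Proof.
move=> Kf; rewrite /inv_step /wrap Kdiag_add Kdiag_scale !Kdiag_mul Kf !Kdiag_delta.
rewrite !fa_mulZl !fa_mulZr Kscal_A Kscal_B.
apply: functional_extensionality => w; rewrite /fa_add /fa_scale !mulrA.
by rewrite mulfV // -[- s ^- 2 / s * s]mulrA mulVf // mulr1 mul1r.
Qed.

Lemma Kdiag_invn n : Kdiag (invn n) = invn n.
Proof.
elim: n => [|n IHn]; last exact: Kdiag_inv_step.
by rewrite Kdiag_delta Kscal_nil; apply: functional_extensionality => w; rewrite /fa_scale mul1r.
Qed.

End KAction.

Section TwistedDerivation.
Variables (C : fieldType) (s : C) (a : bool -> C) (G : bool -> fa C) (M : word -> fa C).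
Implicit Types (f g p : fa C) (c : C) (x y z : bool) (t w : word).

(* The common shape of [E] and [F]: a letter [x] is sent to [a (~~ x)] times the
   other letter, and words are handled by the twisted Leibniz rule. *)
Hypothesis G_delta : forall x, G x = fa_scale (a (~~ x)) (delta C [:: ~~ x]).
Hypothesis M_nil : M [::] = fa0 C.
Hypothesis M_cons : forall x t,
  M (x :: t) = fa_add (fa_mul (G x) (Kmon s t)) (fa_mul (Kinvmon s [:: x]) (M t)).

Local Notation X := (lin_ext M).

Lemma M_cons_coef x t y w :
  M (x :: t) (y :: w) = (y == ~~ x)%:R * a y * Kscal s t * (w == t)%:R
                        + (y == x)%:R * (Kscal s [:: x])^-1 * M t w.
Proof.
rewrite M_cons /fa_add !fa_mul_cons G_delta /Kinvmon !lquot_scale_delta1 !fa_mul_delta0l.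
rewrite /Kmon /fa_scale /delta !mulr0 !mul0r !add0r.
by case: (y =P ~~ x) => [->|_]; rewrite /= ?mulr1 ?mul1r ?mulr0 ?mul0r ?add0r ?mulrA [_^-1 * _]mulrC.
Qed.

Lemma X_nil p : X p [::] = 0.
Proof. by rewrite /lin_ext big1 // => t _; rewrite (tuple0 t) M_nil /fa0 mulr0. Qed.

Lemma X_cons p y w :
  X p (y :: w) = a y * Kscal s w * p (~~ y :: w) + (Kscal s [:: y])^-1 * X (lquot y p) w.
Proof.
rewrite /lin_ext (sum_tuple_cons (size w) (fun t => p t * M t (y :: w))) big_bool /=.
under eq_bigr do rewrite M_cons_coef mulrDr.
under [X in _ + X = _]eq_bigr do rewrite M_cons_coef mulrDr.
rewrite !big_split /=.
have sum_diag x c : \sum_(t : (size w).-tuple bool) p (x :: t) * (c * Kscal s t * (w == t)%:R)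
                  = c * Kscal s w * p (x :: w).
  under eq_bigr do rewrite mulrA.
  by rewrite (sum_tuple_delta w (fun t => p (x :: t) * (c * Kscal s t))) mulrC.
have sum_lquot x c : \sum_(t : (size w).-tuple bool) p (x :: t) * (c * M t w)
                 = c * X (lquot x p) w.
  by rewrite /lin_ext big_distrr; apply: eq_bigr => t _; rewrite mulrCA.
rewrite !sum_diag !sum_lquot.
by case: y; rewrite /= !mul0r ?add0r ?addr0 ?mul1r // addrC.
Qed.

Lemma X_add f g : X (fa_add f g) = fa_add (X f) (X g).
Proof.
apply: functional_extensionality => w; rewrite /lin_ext /fa_add -big_split.
by apply: eq_bigr => t _; rewrite mulrDl.
Qed.

Lemma X_scale c f : X (fa_scale c f) = fa_scale c (X f).
Proof.
apply: functional_extensionality => w; rewrite /lin_ext /fa_scale big_distrr /=.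
by apply: eq_bigr => t _; rewrite mulrA.
Qed.

Lemma X_delta0 : X (delta C [::]) = fa0 C.
Proof.
apply: functional_extensionality => w; rewrite /lin_ext big1 // => t _.
case: w t => [|y w] t; first by rewrite (tuple0 t) M_nil /fa0 mulr0.
by rewrite /delta; case: eqP => [e|]; [move: (size_tuple t); rewrite e | rewrite mul0r].
Qed.

Lemma X_delta1 x : X (delta C [:: x]) = fa_scale (a (~~ x)) (delta C [:: ~~ x]).
Proof.
apply: functional_extensionality => -[|y w]; first by rewrite X_nil /fa_scale /delta mulr0.
rewrite X_cons lquot_delta1 X_scale X_delta0 /fa_scale /fa0 !mulr0 addr0 /delta !eqseq_cons.
case: w => [|z w]; last by rewrite !andbF !mulr0.
by rewrite Kscal_nil mulr1 !andbT; case: x; case: y; rewrite /= ?mulr0 ?mulr1.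
Qed.

Lemma X_mul f g :
  X (fa_mul f g) = fa_add (fa_mul (X f) (Kdiag s g)) (fa_mul (Kdiag_inv s f) (X g)).
Proof.
apply: functional_extensionality => w; elim: w f => [|y w IHw] f.
  by rewrite /fa_add !fa_mul_nil !X_nil mul0r mulr0 addr0.
have lquot_mul : lquot y (fa_mul f g) = fa_add (fa_scale (f [::]) (lquot y g)) (fa_mul (lquot y f) g).
  by apply: functional_extensionality => t; rewrite /lquot fa_mul_cons.
have lquot_X : lquot y (X f) = fa_add (fa_scale (a y) (Kdiag s (lquot (~~ y) f)))
                                     (fa_scale (Kscal s [:: y])^-1 (X (lquot y f))).
  by apply: functional_extensionality => t; rewrite /lquot X_cons /fa_add /fa_scale /Kdiag mulrA.
have lquot_Kinv : lquot y (Kdiag_inv s f) = fa_scale (Kscal s [:: y])^-1 (Kdiag_inv s (lquot y f)).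
  apply: functional_extensionality => t.
  by rewrite /lquot /Kdiag_inv /fa_scale Kscal_cons invfM mulrA.
rewrite X_cons lquot_mul X_add X_scale /fa_add !fa_mul_cons lquot_X lquot_Kinv X_nil mul0r add0r.
rewrite fa_mulDl !fa_mulZl -Kdiag_mul IHw X_cons /fa_add /fa_scale /Kdiag /Kdiag_inv.
rewrite Kscal_nil invr1 mul1r !mulrDr.
ring.
Qed.

Hypothesis s_neq0 : s != 0.

Lemma X_wrap x f z : X f = fa0 C -> Kdiag s f = f ->
  X (wrap x f z) = fa_add (fa_scale (a (~~ x) * Kscal s [:: z]) (wrap (~~ x) f z))
                          (fa_scale ((Kscal s [:: x])^-1 * a (~~ z)) (wrap x f (~~ z))).
Proof.
move=> Xf Kf; rewrite /wrap !X_mul Xf fa_mul0r fa_addr0 Kf X_delta1 Kdiag_delta.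
rewrite Kdiag_inv_mul Kdiag_inv_delta (Kdiag_inv_fixed s_neq0 Kf) X_delta1.
rewrite !fa_mulZl !fa_mulZr.
by apply: functional_extensionality => w; rewrite /fa_add /fa_scale !mulrA.
Qed.

Lemma X_inv_step f : X f = fa0 C -> Kdiag s f = f -> X (inv_step s f) = fa0 C.
Proof.
move=> Xf Kf; rewrite /inv_step X_add X_scale !X_wrap //= Kscal_A Kscal_B invrK.
apply: functional_extensionality => w; rewrite /fa_add /fa_scale /fa0.
by field.
Qed.

Lemma X_invn n : X (invn s n) = fa0 C.
Proof.
elim: n => [|n IHn]; first exact: X_delta0.
exact: X_inv_step (Kdiag_invn s_neq0 n).
Qed.

End TwistedDerivation.

Section BalancedSupport.
Variable C : fieldType.
Implicit Types (f g : fa C) (w : word).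

Definition balanced w := count negb w == count id w.
Definition bal_supported f := forall w, ~~ balanced w -> f w = 0.

Definition anbn n : word := nseq n false ++ nseq n true.

Lemma anbnS n : anbn n.+1 = rcons (false :: anbn n) true.
Proof.
by rewrite /anbn /= rcons_cat; congr (_ :: _ ++ _); elim: n => //= n ->.
Qed.

Lemma size_anbn n : size (anbn n) = (n + n)%N.
Proof. by rewrite size_cat !size_nseq. Qed.

Lemma take_anbn_unbalanced n i : (0 < i < n + n)%N -> ~~ balanced (take i (anbn n)).
Proof.
move=> /andP[i_gt0 i_lt]; rewrite /balanced /anbn take_cat size_nseq.
case: ltnP => hi; first by rewrite take_nseq ?(ltnW hi) // !count_nseq /=; lia.
by rewrite take_nseq; [rewrite !count_cat !count_nseq /=; lia | lia].
Qed.

Lemma fa_mul_bal_supported f g :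
  bal_supported f -> bal_supported g -> bal_supported (fa_mul f g).
Proof.
move=> bf bg w unbal_w; rewrite /fa_mul big1 // => i _.
have [bal_take|] := boolP (balanced (take i w)); last by move/bf ->; rewrite mul0r.
rewrite bg ?mulr0 //; apply: contra unbal_w => bal_drop.
by rewrite /balanced -(cat_take_drop i w) !count_cat (eqP bal_take) (eqP bal_drop).
Qed.

Lemma fa_mul_anbn f g n : bal_supported f -> f (anbn n) = 0 -> g (anbn n) = 0 ->
  fa_mul f g (anbn n) = 0.
Proof.
move=> bf f0 g0; rewrite /fa_mul big1 // => -[[|i] hi] _ /=; first by rewrite drop0 g0 mulr0.
have [i_lt|i_ge] := ltnP i.+1 (n + n).
  by rewrite bf ?mul0r // take_anbn_unbalanced.
by rewrite take_oversize ?size_anbn // f0 mul0r.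
Qed.

Variable S : seq (fa C).
Hypothesis S_bal : forall g, List.In g S -> bal_supported g.

Lemma gen_bal_supported f : gen S f -> bal_supported f.
Proof.
elim=> {f} [w|f /S_bal //|f g _ bf _ bg w|c f _ bf w|f g _ bf _ bg|f g _ bf e w].
- by rewrite /fa1 /delta; case: eqP => // ->.
- by rewrite /fa_add => /[dup] /bf -> /bg ->; rewrite addr0.
- by rewrite /fa_scale => /bf ->; rewrite mulr0.
- exact: fa_mul_bal_supported.
- by rewrite -e; apply: bf.
Qed.

Lemma gen_vanish_anbn n f : (0 < n)%N -> (forall g, List.In g S -> g (anbn n) = 0) ->
  gen S f -> f (anbn n) = 0.
Proof.
move=> n_gt0 S0; elim=> {f} [|f /S0 //|f g _ f0 _ g0|c f _ f0|f g gen_f f0 _ g0|f g _ f0 e].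
- by rewrite /fa1 /delta; case: (n) n_gt0.
- by rewrite /fa_add f0 g0 addr0.
- by rewrite /fa_scale f0 mulr0.
- exact: fa_mul_anbn (gen_bal_supported gen_f) f0 g0.
- by rewrite -e.
Qed.

End BalancedSupport.

Lemma invn_anbn (C : fieldType) (s : C) n : invn s n (anbn n) = 1.
Proof.
elim: n => [|n IHn]; first by rewrite /= /delta eqxx.
rewrite anbnS [invn _ _.+1]/= /inv_step /fa_add /fa_scale /wrap !fa_mul_delta1r !fa_mul_delta1l IHn /=.
by rewrite !mul0r mulr0 addr0 !mul1r.
Qed.

Lemma expfI_nonroot (F : fieldType) (x : F) m n :
  x != 0 -> (forall k, (0 < k)%N -> x ^+ k != 1) -> x ^+ m = x ^+ n -> m = n.
Proof.
move=> x_neq0 x_nonroot; wlog le_mn : m n / (m <= n)%N => [hwlog|].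
  by case: (leqP m n) => [|/ltnW] h e; [apply: hwlog | apply/esym/hwlog].
move: (n - m)%N (subnKC le_mn) => [|k] <-; first by rewrite addn0.
rewrite exprD -{1}[x ^+ m]mulr1 => /(mulfI (expf_neq0 m x_neq0)) /esym/eqP.
by rewrite (negPf (x_nonroot k.+1 isT)).
Qed.

Section Invariants.
Variables (C : fieldType) (s : C).
Hypothesis s_neq0 : s != 0.

Lemma Kscal_eq1_balanced w :
  (forall k, (0 < k)%N -> s ^+ k != 1) -> Kscal s w = 1 -> balanced w.
Proof.
move=> s_nonroot /(congr1 ( *%R^~ (s ^+ count id w))).
rewrite /balanced mulfVK ?expf_neq0 // mul1r.
by move=> /(expfI_nonroot s_neq0 s_nonroot) ->.
Qed.

Lemma Kop_fixed_bal_supported f : (forall k, (0 < k)%N -> s ^+ k != 1) ->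
  (forall w, Kop s f w = f w) -> bal_supported f.
Proof.
move=> s_nonroot Kf w; apply: contraNeq => fw_neq0.
apply: (Kscal_eq1_balanced s_nonroot); apply: (mulIf fw_neq0).
by rewrite mul1r -[RHS]Kf Kop_Kdiag.
Qed.

Lemma fsupp_invn n : fsupp (invn s n).
Proof.
elim: n => [|n [m vanish_m]] /=; first by exists 1%N; exact: (@vanish_from_delta C [::]).
have vanish_wrap x z : vanish_from (wrap x (invn s n) z) (2 + m + 2).
  exact: (vanish_from_mul (vanish_from_mul (@vanish_from_delta C [:: x]) vanish_m)
                          (@vanish_from_delta C [:: z])).
by exists (2 + m + 2)%N => w hw; rewrite /inv_step /fa_add /fa_scale !vanish_wrap // mulr0 addr0.
Qed.

Lemma Eop_invn n : Eop s (invn s n) = fa0 C.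
Proof.
apply: (X_invn (a := fun y => if y then 0 else - s ^+ 3) (G := Egen s)) => // -[//|].
by apply: functional_extensionality => w; rewrite /fa_scale mul0r.
Qed.

Lemma Fop_invn n : Fop s (invn s n) = fa0 C.
Proof.
apply: (X_invn (a := fun y => if y then - s ^- 3 else 0) (G := Fgen s)) => // -[|//].
by apply: functional_extensionality => w; rewrite /fa_scale mul0r.
Qed.

Lemma invn_invariant n : Defs.invariant s (invn s n).
Proof.
split; first exact: fsupp_invn.
split; first by move=> w; rewrite Eop_invn.
split; first by move=> w; rewrite Fop_invn.
by move=> w; rewrite Kop_Kdiag Kdiag_invn.
Qed.

End Invariants.

Theorem proposition6p1 (R : realType) (q s : R[i]) :
  `|q| = 1 -> q != 1 -> q != -1 -> q != 'i -> q != - 'i ->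
  s ^+ 2 = q ->
  (forall d : nat, (0 < d)%N -> q ^+ (2 * d) != 1) ->
  ~ inv_fin_gen s.
Proof.
move=> q_norm1 _ _ _ _ sq q_nonroot [S [S_inv S_gen]].
have s_neq0 : s != 0.
  apply/eqP => s0; move: q_norm1; rewrite -sq s0 expr0n /= normr0 => /esym/eqP.
  by rewrite oner_eq0.
have s_nonroot k : (0 < k)%N -> s ^+ k != 1.
  move=> k_gt0; apply: contra (q_nonroot k k_gt0) => /eqP sk1.
  by rewrite -sq -exprM mulnA mulnC exprM sk1 expr1n.
have [N S_vanish] := fsupp_seq_bound (fun f Sf => (S_inv f Sf).1).
have S_bal g (Sg : List.In g S) : bal_supported g.
  by have [_ [_ [_ Kg]]] := S_inv g Sg; apply: Kop_fixed_bal_supported Kg.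
have S_anbn g (Sg : List.In g S) : g (anbn N.+1) = 0.
  by apply: (S_vanish g Sg); rewrite size_anbn; lia.
have := gen_vanish_anbn S_bal (ltn0Sn N) S_anbn (S_gen _ (invn_invariant s_neq0 N.+1)).
by rewrite invn_anbn; apply/eqP; rewrite oner_eq0.
Qed.
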